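(* Let $f_1,f_2$ be strongly hyperbolic functions, $p=(x_p,y_p)\in\mathbb{R}^2$, $s<0$, and let $q\in\mathcal{P}$ be a point not parallel to $p$. Then exactly one of the following holds: (1) there exists $t\in\mathbb{R}$ such that $\overline{l_{s,t}}$ contains $p$ and $q$; (2) there exist $a_1>0$, $b_1,c_1\in\mathbb{R}$ such that $\overline{f_{a_1,b_1,c_1}}$ contains $p$ and $q$ and $f'_{a_1,b_1,c_1}(x_p)=s$.
   Context: Identify $\mathbb{S}^1$ with $\mathbb{R}\cup\{\infty\}$, $\mathcal{P}=\mathbb{S}^1\times\mathbb{S}^1$, $\mathbb{R}^+=(0,\infty)$. Two points of $\mathcal{P}$ are parallel if they have the same first coordinate or the same second coordinate. A function $f:\mathbb{R}^+\to\mathbb{R}^+$ is strongly hyperbolic if: (1) $\lim_{x\to0+}f(x)=+\infty$, $\lim_{x\to+\infty}f(x)=0$; (2) $f$ strictly convex; (3) $\lim_{x\to+\infty}f(x+b)/f(x)=1$ for each $b\in\mathbb{R}$; (4) $f$ differentiable; (5) $\ln|f'|$ strictly convex. For $a>0$, $b,c\in\mathbb{R}$: $f_{a,b,c}:\mathbb{R}\setminus\{-b\}\to\mathbb{R}$, $f_{a,b,c}(x)=af_1(x+b)+c$ for $x>-b$, $f_{a,b,c}(x)=-af_2(-x-b)+c$ for $x<-b$; $\overline{f_{a,b,c}}=\{(x,f_{a,b,c}(x)):x\ne-b\}\cup\{(-b,\infty),(\infty,c)\}$; for $s,t\in\mathbb{R}$, $\overline{l_{s,t}}=\{(x,sx+t):x\in\mathbb{R}\}\cup\{(\infty,\infty)\}$.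 *)

From Stdlib Require Import Reals.
From Coquelicot Require Import Coquelicot.
Open Scope R_scope.

(* S^1 = R ∪ {∞}: [Some x] is the real x, [None] is ∞. *)
Definition S1 := option R.
Definition P := (S1 * S1)%type.

Definition parallel (u v : P) : Prop := fst u = fst v \/ snd u = snd v.

Definition strictly_convex_pos (g : R -> R) : Prop :=
  forall x y t, 0 < x -> 0 < y -> x <> y -> 0 < t < 1 ->
    g (t * x + (1 - t) * y) < t * g x + (1 - t) * g y.

(* strongly hyperbolic f : R^+ -> R^+ (f is given as a total function on R;
   only its values on (0,∞) matter) *)
Definition strongly_hyperbolic (f : R -> R) : Prop :=
  (forall x, 0 < x -> 0 < f x) /\
  filterlim f (at_right 0) (Rbar_locally p_infty) /\
  is_lim f p_infty 0 /\
  strictly_convex_pos f /\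
  (forall b : R, is_lim (fun x => f (x + b) / f x) p_infty 1) /\
  (forall x, 0 < x -> ex_derive f x) /\
  strictly_convex_pos (fun x => ln (Rabs (Derive f x))).

(* f_{a,b,c} as a total function; the value at x = -b is irrelevant (c). *)
Definition fabc (f1 f2 : R -> R) (a b c : R) (x : R) : R :=
  match Rlt_dec (- b) x with
  | left _ => a * f1 (x + b) + c
  | right _ =>
      match Rlt_dec x (- b) with
      | left _ => - a * f2 (- x - b) + c
      | right _ => c
      end
  end.

Definition in_fbar (f1 f2 : R -> R) (a b c : R) (u : P) : Prop :=
  (exists x, x <> - b /\ u = (Some x, Some (fabc f1 f2 a b c x))) \/
  u = (Some (- b), None) \/
  u = (None, Some c).

Definition in_lbar (s t : R) (u : P) : Prop :=
  (exists x, u = (Some x, Some (s * x + t))) \/ u = (None, None).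

(* Put p at distance u > 0 to the right of the vertical asymptote of f_{a,b,c}; the slope
   condition forces a = s / f_1'(u).  With d = x_q - x_p and m = (y_q - y_p) / s, the point q
   is then on the right branch iff f_1(u + d) - f_1(u) = m f_1'(u), on the left branch iff
   f_1(u) + f_2(-u - d) + m f_1'(u) = 0, and on the horizontal asymptote iff
   f_1(u) + m f_1'(u) = 0.  The intermediate value theorem solves these for u when
   0 < m < d or m < d < 0, when d < 0 < m, and when 0 < m respectively; convexity, the
   blow-up of f at 0 and f(x + b) / f(x) -> 1 at infinity supply the sign changes.  The point
   reflection (x, y) -> (-x, -y), which swaps f_1 and f_2 and preserves slopes, covers the
   remaining cases.  The two alternatives exclude each other because the branch through p
   lies strictly above its tangent at p and the other branch lies on the other side of the
   horizontal asymptote. *)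

From Stdlib Require Import Reals Lra Classical.
From Coquelicot Require Import Coquelicot.
Open Scope R_scope.
Set Implicit Arguments.

Lemma derivable_pt_lim_le_slope (g : R -> R) (l C : R) :
  derivable_pt_lim g 0 l -> (forall t, 0 < t < 1 -> g t - g 0 <= C * t) -> l <= C.
Proof.
  intros Hg Hle. apply Rnot_lt_le. intro Hlt.
  destruct (Hg (l - C)) as [d Hd]; [lra|].
  pose proof (cond_pos d) as Hd0.
  set (t := Rmin d 1 / 2).
  assert (Ht : 0 < t < 1 /\ t < d).
  { pose proof (Rmin_l d 1). pose proof (Rmin_r d 1).
    pose proof (Rmin_glb_lt d 1 0 Hd0 Rlt_0_1). unfold t. lra. }
  specialize (Hd t ltac:(lra) ltac:(rewrite Rabs_pos_eq; lra)).
  rewrite Rplus_0_l in Hd. apply Rabs_def2 in Hd.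
  assert (Hq : (g t - g 0) / t <= C).
  { apply Rmult_le_reg_r with t; [lra|]. unfold Rdiv.
    rewrite Rmult_assoc, Rinv_l by lra. specialize (Hle t (proj1 Ht)). lra. }
  lra.
Qed.

Section ConvexDerivable.

Variable f : R -> R.
Hypothesis f_convex : strictly_convex_pos f.
Hypothesis f_derivable : forall x, 0 < x -> ex_derive f x.

Lemma continuity_pt_pos x : 0 < x -> continuity_pt f x.
Proof. intros Hx. apply derivable_continuous_pt, ex_derive_Reals_0, f_derivable, Hx. Qed.

Lemma tangent_le x y : 0 < x -> 0 < y -> f x + Derive f x * (y - x) <= f y.
Proof.
  intros Hx Hy. destruct (Req_dec x y) as [<-|Hxy]; [lra|].
  assert (Hd : is_derive (fun t => f (x + t * (y - x))) 0 (Derive f x * (y - x))).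
  { auto_derive.
    - rewrite Rmult_0_l, Rplus_0_r. auto.
    - rewrite Rmult_0_l, Rplus_0_r. change (fun u => f u) with f. ring. }
  enough (Derive f x * (y - x) <= f y - f x) by lra.
  apply (derivable_pt_lim_le_slope (proj1 (is_derive_Reals _ _ _) Hd)).
  intros t Ht. rewrite Rmult_0_l, Rplus_0_r.
  pose proof (f_convex Hy Hx (not_eq_sym Hxy) Ht) as Hc.
  replace (t * y + (1 - t) * x) with (x + t * (y - x)) in Hc by ring. lra.
Qed.

Lemma tangent_lt x y : 0 < x -> 0 < y -> x <> y -> f x + Derive f x * (y - x) < f y.
Proof.
  intros Hx Hy Hxy.
  pose proof (f_convex Hx Hy Hxy (ltac:(lra) : 0 < 1 / 2 < 1)) as Hc.
  pose proof (tangent_le (y := (x + y) / 2) Hx ltac:(lra)) as Ht.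
  replace (1 / 2 * x + (1 - 1 / 2) * y) with ((x + y) / 2) in Hc by field. lra.
Qed.

Lemma Derive_increasing x y : 0 < x -> x < y -> Derive f x < Derive f y.
Proof.
  intros Hx Hxy.
  pose proof (tangent_lt (y := y) Hx ltac:(lra) ltac:(lra)).
  pose proof (tangent_lt (x := y) (y := x) ltac:(lra) Hx ltac:(lra)).
  assert (0 < (Derive f y - Derive f x) * (y - x)) by lra. nra.
Qed.

Lemma Derive_dist_le x k : 0 < x -> 0 < x + k -> 0 < x + 2 * k -> k <> 0 ->
  Rabs (Derive f (x + k) - Derive f x)
  <= 2 * Rabs ((f (x + 2 * k) - f x) / (2 * k) - Derive f x).
Proof.
  intros Hx Hk H2k Hk0.
  set (Q := (f (x + 2 * k) - f x) / (2 * k)).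
  assert (HQ : f (x + 2 * k) - f x = 2 * k * Q) by (unfold Q; field; exact Hk0).
  pose proof (tangent_le Hk H2k) as T1. pose proof (tangent_le Hx Hk) as T2.
  replace (x + 2 * k - (x + k)) with k in T1 by ring.
  replace (x + k - x) with k in T2 by ring.
  assert (Hsign : 0 < (Derive f (x + k) - Derive f x) * k).
  { destruct (Rlt_or_le 0 k).
    - pose proof (Derive_increasing Hx (ltac:(lra) : x < x + k)). nra.
    - pose proof (Derive_increasing Hk (ltac:(lra) : x + k < x)). nra. }
  apply Rmult_le_reg_r with (Rabs k); [apply Rabs_pos_lt, Hk0|].
  rewrite <- Rabs_mult, Rabs_pos_eq by lra.
  apply Rle_trans with (2 * k * (Q - Derive f x)); [lra|].
  pose proof (Rle_abs ((Q - Derive f x) * k)) as Habs.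
  rewrite Rabs_mult in Habs. lra.
Qed.

Lemma Derive_continuous x : 0 < x -> continuity_pt (Derive f) x.
Proof.
  intros Hx eps He.
  destruct (proj1 (is_derive_Reals _ _ _) (Derive_correct _ _ (f_derivable Hx)) (eps / 2))
    as [d Hd]; [lra|].
  pose proof (cond_pos d) as Hd0.
  exists (Rmin (d / 2) (x / 2)). split; [apply Rmin_glb_lt; lra|].
  intros y [[_ Hyx] Hy]. simpl in Hy |- *. unfold R_dist in Hy |- *.
  pose proof (Rmin_l (d / 2) (x / 2)). pose proof (Rmin_r (d / 2) (x / 2)).
  set (k := y - x) in Hy. replace y with (x + k) by (unfold k; ring).
  assert (Hk : k <> 0) by (unfold k; lra).
  apply Rabs_def2 in Hy.
  eapply Rle_lt_trans; [apply Derive_dist_le; lra|].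
  enough (Rabs ((f (x + 2 * k) - f x) / (2 * k) - Derive f x) < eps / 2) by lra.
  apply Hd; [lra|]. rewrite Rabs_mult, (Rabs_pos_eq 2) by lra.
  assert (Rabs k < d / 2) by (apply Rabs_def1; lra). lra.
Qed.

End ConvexDerivable.

(* Conditions (1)-(4) of strong hyperbolicity. *)
Record hyperbolic (f : R -> R) : Prop := {
  hyperbolic_pos : forall x, 0 < x -> 0 < f x;
  hyperbolic_at_0 : filterlim f (at_right 0) (Rbar_locally p_infty);
  hyperbolic_at_infty : is_lim f p_infty 0;
  hyperbolic_convex : strictly_convex_pos f;
  hyperbolic_shift : forall b, is_lim (fun x => f (x + b) / f x) p_infty 1;
  hyperbolic_derivable : forall x, 0 < x -> ex_derive f x }.

Lemma strongly_hyperbolic_hyperbolic f : strongly_hyperbolic f -> hyperbolic f.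
Proof. intros (Hpos & H0 & Hinf & Hcvx & Hshift & Hder & _). now constructor. Qed.

Section Hyperbolic.

Variable f : R -> R.
Hypothesis hf : hyperbolic f.
Let f_pos := hyperbolic_pos hf.
Let f_convex := hyperbolic_convex hf.
Let f_derivable := hyperbolic_derivable hf.
Let f_continuous := continuity_pt_pos f_derivable.
Let Df_continuous := Derive_continuous f_convex f_derivable.

Lemma Derive_neg x : 0 < x -> Derive f x < 0.
Proof.
  intros Hx. apply Rnot_le_lt. intro HD.
  destruct (proj2 (is_lim_spec _ _ _) (hyperbolic_at_infty hf) (mkposreal _ (f_pos Hx)))
    as [M HM].
  set (y := Rmax M x + 1). pose proof (Rmax_l M x). pose proof (Rmax_r M x).
  specialize (HM y ltac:(unfold y; lra)). simpl in HM.
  rewrite Rminus_0_r in HM. apply Rabs_def2 in HM.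
  pose proof (tangent_lt f_convex f_derivable (y := y) Hx ltac:(unfold y; lra)
    ltac:(unfold y; lra)).
  assert (0 <= Derive f x * (y - x)) by (apply Rmult_le_pos; unfold y; lra).
  lra.
Qed.

Lemma hyperbolic_decr x y : 0 < x -> x < y -> f y < f x.
Proof.
  intros Hx Hxy.
  pose proof (tangent_lt f_convex f_derivable (x := y) (y := x) ltac:(lra) Hx ltac:(lra)).
  pose proof (Derive_neg (x := y) ltac:(lra)). nra.
Qed.

Lemma exists_large_near_0 M e : 0 < e -> exists v, 0 < v < e /\ M < f v.
Proof.
  intros He.
  assert (HM : Rbar_locally p_infty (fun y => M < y)) by now exists M.
  destruct (hyperbolic_at_0 hf HM) as [d Hd].
  pose proof (cond_pos d). pose proof (Rmin_l d e). pose proof (Rmin_r d e).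
  pose proof (Rmin_glb_lt d e 0 ltac:(lra) He).
  exists (Rmin d e / 2). split; [lra|]. apply Hd; [|lra].
  change (Rabs (Rmin d e / 2 - 0) < d). apply Rabs_def1; lra.
Qed.

Lemma exists_steep_tangent_near_0 m C e : 0 < m -> 0 < e ->
  exists u, 0 < u < e /\ f u + C < - m * Derive f u.
Proof.
  intros Hm He.
  set (u0 := Rmin e m / 2).
  assert (Hu0 : 0 < u0 /\ u0 < e /\ 2 * u0 <= m).
  { pose proof (Rmin_l e m). pose proof (Rmin_r e m). pose proof (Rmin_glb_lt e m 0 He Hm).
    unfold u0. lra. }
  destruct (exists_large_near_0 (2 * f u0 + C) (proj1 Hu0)) as [u [Hu Hfu]].
  exists u. split; [lra|].
  pose proof (tangent_le f_convex f_derivable (proj1 Hu) (proj1 Hu0)) as Ht.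
  pose proof (Derive_neg (proj1 Hu)) as HD.
  assert (f u - f u0 <= - Derive f u * u0) by nra.
  assert (- Derive f u * (2 * u0) <= - Derive f u * m) by (apply Rmult_le_compat_l; lra).
  lra.
Qed.

Lemma exists_flat_tangent m : 0 < m -> exists u, 0 < u /\ - m * Derive f u < f u.
Proof.
  intros Hm.
  destruct (proj2 (is_lim_spec _ _ _) (hyperbolic_shift hf (-1))
    (mkposreal (/ m) (Rinv_0_lt_compat _ Hm))) as [M HM].
  set (u := Rmax M 1 + 1). pose proof (Rmax_l M 1). pose proof (Rmax_r M 1).
  exists u. split; [unfold u; lra|].
  specialize (HM u ltac:(unfold u; lra)). simpl in HM. apply Rabs_def2 in HM.
  pose proof (f_pos (x := u) ltac:(unfold u; lra)) as Hfu.
  pose proof (tangent_le f_convex f_derivable (x := u) (y := u + -1)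
    ltac:(unfold u; lra) ltac:(unfold u; lra)) as Ht.
  assert (Hr : f (u + -1) = f (u + -1) / f u * f u) by (field; lra).
  set (r := f (u + -1) / f u) in *.
  assert (Hinv : m * / m = 1) by (field; lra).
  assert (- Derive f u <= f u * (r - 1)) by lra.
  assert (m * (r - 1) < 1) by nra.
  nra.
Qed.

Lemma shifted_difference_le d K t1 t2 : 0 < d -> 0 < t1 < t2 ->
  (forall t, t1 <= t <= t2 -> K * Derive f t <= Derive f (t + d)) ->
  f (t1 + d) - K * f t1 <= f (t2 + d) - K * f t2.
Proof.
  intros Hd Ht Hder.
  destruct (MVT_gen (fun t => f (t + d) - K * f t) t1 t2
    (fun t => Derive f (t + d) - K * Derive f t)) as [c [Hc Hmvt]].
  - intros x Hx. rewrite Rmin_left, Rmax_right in Hx by lra. auto_derive.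
    + repeat split; apply f_derivable; lra.
    + change (fun u => f u) with f. ring.
  - intros x Hx. rewrite Rmin_left, Rmax_right in Hx by lra.
    reg; apply f_continuous; lra.
  - rewrite Rmin_left, Rmax_right in Hc by lra.
    pose proof (Hder c Hc).
    assert (0 <= (Derive f (c + d) - K * Derive f c) * (t2 - t1))
      by (apply Rmult_le_pos; lra).
    lra.
Qed.

Lemma exists_Derive_ratio_lt d K t0 : 0 < d -> K < 1 -> 0 <= t0 ->
  exists t, t0 < t /\ Derive f (t + d) < K * Derive f t.
Proof.
  intros Hd HK Ht0.
  destruct (Rle_or_lt K 0) as [HK0|HK0].
  { exists (t0 + 1). split; [lra|].
    pose proof (Derive_neg (x := t0 + 1 + d) ltac:(lra)).
    pose proof (Derive_neg (x := t0 + 1) ltac:(lra)). nra. }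
  apply NNPP. intro Hn.
  destruct (proj2 (is_lim_spec _ _ _) (hyperbolic_shift hf d) (mkposreal (1 - K) ltac:(lra)))
    as [M1 HM1].
  set (t1 := Rmax M1 t0 + 1).
  assert (Ht1 : M1 < t1 /\ t0 < t1)
    by (pose proof (Rmax_l M1 t0); pose proof (Rmax_r M1 t0); unfold t1; lra).
  specialize (HM1 t1 (proj1 Ht1)). simpl in HM1. apply Rabs_def2 in HM1.
  pose proof (f_pos (x := t1) ltac:(lra)).
  assert (Hh1 : 0 < f (t1 + d) - K * f t1).
  { assert (f (t1 + d) = f (t1 + d) / f t1 * f t1) by (field; lra). nra. }
  destruct (proj2 (is_lim_spec _ _ _) (hyperbolic_at_infty hf) (mkposreal _ Hh1)) as [M2 HM2].
  set (t2 := Rmax M2 t1 + 1).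
  assert (Ht2 : M2 < t2 /\ t1 < t2)
    by (pose proof (Rmax_l M2 t1); pose proof (Rmax_r M2 t1); unfold t2; lra).
  specialize (HM2 (t2 + d) ltac:(lra)). simpl in HM2.
  rewrite Rminus_0_r in HM2. apply Rabs_def2 in HM2.
  pose proof (f_pos (x := t2) ltac:(lra)).
  pose proof (@shifted_difference_le d K t1 t2 Hd ltac:(lra)) as Hle.
  enough (f (t1 + d) - K * f t1 <= f (t2 + d) - K * f t2) by nra.
  apply Hle. intros t Ht. apply Rnot_lt_le. intro Hlt. apply Hn. exists t. split; [lra | exact Hlt].
Qed.

Lemma exists_secant_tangent_pos d m : 0 < m < d ->
  exists u, 0 < u /\ f (u + d) - f u = m * Derive f u.
Proof.
  intros Hmd.
  assert (HK : m / d < 1) by (apply (Rdiv_lt_1 m d); lra).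
  destruct (exists_Derive_ratio_lt (d := d) (t0 := 0) ltac:(lra) HK (Rle_refl 0)) as [t [Ht Hr]].
  destruct (exists_steep_tangent_near_0 0 (proj1 Hmd) Ht) as [v [Hv Hsteep]].
  destruct (Ranalysis5.IVT_interv (fun u => f u - f (u + d) + m * Derive f u) v t)
    as [u [Hu Hu0]].
  - intros x Hx. reg; (apply Df_continuous || apply f_continuous); lra.
  - lra.
  - pose proof (f_pos (x := v + d) ltac:(lra)). lra.
  - pose proof (tangent_le f_convex f_derivable (x := t + d) (y := t) ltac:(lra) Ht) as Htan.
    replace (t - (t + d)) with (- d) in Htan by ring.
    assert (d * Derive f (t + d) < m * Derive f t).
    { replace (m * Derive f t) with (d * (m / d * Derive f t)) by (field; lra). nra. }
    lra.
  - exists u. split; [lra|]. lra.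
Qed.

Lemma exists_secant_tangent_neg d m : m < d < 0 ->
  exists u, 0 < u + d /\ f (u + d) - f u = m * Derive f u.
Proof.
  intros Hmd.
  destruct (exists_large_near_0 (f (- d) + m * Derive f (- d)) (e := - d) ltac:(lra))
    as [v [Hv Hlarge]].
  assert (HK : d / m < 1).
  { replace (d / m) with (- d / - m) by (field; lra). apply (Rdiv_lt_1 (- d) (- m)); lra. }
  destruct (exists_Derive_ratio_lt (d := - d) (t0 := v) ltac:(lra) HK ltac:(lra))
    as [t [Ht Hr]].
  destruct (Ranalysis5.IVT_interv (fun u => f u - f (u + d) + m * Derive f u) (v - d) (t - d))
    as [u [Hu Hu0]].
  - intros x Hx. reg; (apply Df_continuous || apply f_continuous); lra.
  - lra.
  - replace (v - d + d) with v by ring.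
    pose proof (hyperbolic_decr (x := - d) (y := v - d) ltac:(lra) ltac:(lra)).
    pose proof (Derive_increasing f_convex f_derivable (x := - d) (y := v - d)
      ltac:(lra) ltac:(lra)).
    assert (m * Derive f (v - d) < m * Derive f (- d)) by nra.
    lra.
  - replace (t - d + d) with t by ring.
    pose proof (tangent_le f_convex f_derivable (x := t) (y := t - d) ltac:(lra) ltac:(lra))
      as Htan.
    replace (t - d - t) with (- d) in Htan by ring.
    replace (t + - d) with (t - d) in Hr by ring.
    assert (d * Derive f t < m * Derive f (t - d)).
    { replace (d * Derive f t) with (m * (d / m * Derive f t)) by (field; lra). nra. }
    lra.
  - exists u. split; [lra|]. lra.
Qed.

Lemma exists_tangent_root m : 0 < m -> exists u, 0 < u /\ f u + m * Derive f u = 0.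
Proof.
  intros Hm.
  destruct (exists_flat_tangent Hm) as [ul [Hul Hflat]].
  destruct (exists_steep_tangent_near_0 0 Hm Hul) as [us [Hus Hsteep]].
  destruct (Ranalysis5.IVT_interv (fun u => f u + m * Derive f u) us ul) as [u [Hu Hu0]].
  - intros x Hx. reg; (apply Df_continuous || apply f_continuous); lra.
  - lra.
  - lra.
  - lra.
  - exists u. split; [lra|]. exact Hu0.
Qed.

End Hyperbolic.

Lemma exists_tangent_two_branches f g d m : hyperbolic f -> hyperbolic g -> d < 0 < m ->
  exists u, 0 < u /\ u + d < 0 /\ f u + g (- u - d) + m * Derive f u = 0.
Proof.
  intros hf hg Hdm.
  destruct (exists_steep_tangent_near_0 hf (g (- d / 2)) (proj2 Hdm) (e := - d / 2) ltac:(lra))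
    as [us [Hus Hsteep]].
  destruct (exists_large_near_0 hg (- m * Derive f (- d / 2)) (e := - d / 2) ltac:(lra))
    as [v [Hv Hlarge]].
  destruct (Ranalysis5.IVT_interv (fun u => f u + g (- u - d) + m * Derive f u) us (- d - v))
    as [u [Hu Hu0]].
  - intros x Hx. reg.
    + apply (Derive_continuous (hyperbolic_convex hf) (hyperbolic_derivable hf)); lra.
    + apply (continuity_pt_pos (hyperbolic_derivable hg)); lra.
    + apply (continuity_pt_pos (hyperbolic_derivable hf)); lra.
  - lra.
  - pose proof (hyperbolic_decr hg (x := - d / 2) (y := - us - d) ltac:(lra) ltac:(lra)).
    lra.
  - replace (- (- d - v) - d) with v by ring.
    pose proof (hyperbolic_pos hf (x := - d - v) ltac:(lra)).
    pose proof (Derive_increasing (hyperbolic_convex hf) (hyperbolic_derivable hf)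
      (x := - d / 2) (y := - d - v) ltac:(lra) ltac:(lra)).
    assert (m * Derive f (- d / 2) < m * Derive f (- d - v)) by nra.
    lra.
  - exists u. split; [lra|]. split; [lra|]. exact Hu0.
Qed.

Lemma fabc_right f1 f2 a b c x : - b < x -> fabc f1 f2 a b c x = a * f1 (x + b) + c.
Proof. intros H. unfold fabc. destruct (Rlt_dec (- b) x); [reflexivity | lra]. Qed.

Lemma fabc_left f1 f2 a b c x : x < - b -> fabc f1 f2 a b c x = - a * f2 (- x - b) + c.
Proof.
  intros H. unfold fabc.
  destruct (Rlt_dec (- b) x); [lra|]. destruct (Rlt_dec x (- b)); [reflexivity | lra].
Qed.

Lemma fabc_reflect f1 f2 a b c x : fabc f1 f2 a b c x = - fabc f2 f1 a (- b) (- c) (- x).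
Proof.
  unfold fabc.
  destruct (Rlt_dec (- b) x), (Rlt_dec (- - b) (- x)), (Rlt_dec x (- b)),
    (Rlt_dec (- x) (- - b)); try lra.
  - replace (- - x - - b) with (x + b) by ring. ring.
  - replace (- x + - b) with (- x - b) by ring. ring.
Qed.

Lemma is_derive_fabc_right f1 f2 a b c x : ex_derive f1 (x + b) -> - b < x ->
  is_derive (fabc f1 f2 a b c) x (a * Derive f1 (x + b)).
Proof.
  intros Hd Hx.
  apply is_derive_ext_loc with (fun y => a * f1 (y + b) + c).
  - apply locally_interval with (- b) p_infty; [exact Hx | exact I|].
    intros y Hy _. symmetry. apply fabc_right, Hy.
  - auto_derive; [exact Hd|]. change (fun u => f1 u) with f1. ring.
Qed.

Definition reflect (u : P) : P := (option_map Ropp (fst u), option_map Ropp (snd u)).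

Lemma reflect_involutive u : reflect (reflect u) = u.
Proof. destruct u as [[x|] [y|]]; unfold reflect; simpl; rewrite ?Ropp_involutive; reflexivity. Qed.

Lemma in_fbar_reflect f1 f2 a b c u :
  in_fbar f1 f2 a b c u -> in_fbar f2 f1 a (- b) (- c) (reflect u).
Proof.
  intros [[x [Hx ->]] | [-> | ->]]; unfold reflect; simpl.
  - left. exists (- x). split; [lra|].
    rewrite (fabc_reflect f1 f2 a b c x), Ropp_involutive. reflexivity.
  - right; left. reflexivity.
  - right; right. reflexivity.
Qed.

Lemma is_derive_fabc_reflect f1 f2 a b c x l :
  is_derive (fabc f1 f2 a b c) x l -> is_derive (fabc f2 f1 a (- b) (- c)) (- x) l.
Proof.
  intros H.
  apply is_derive_ext with (fun y => - fabc f1 f2 a b c (- y)).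
  { intros y. rewrite (fabc_reflect f2 f1 a (- b) (- c) y), !Ropp_involutive. reflexivity. }
  rewrite <- (Ropp_involutive x) in H.
  pose proof (is_derive_opp _ _ _ (is_derive_comp _ Ropp (- x) _ (- 1) H
    ltac:(auto_derive; [exact I | ring]))) as Hc.
  replace l with (opp (scal (- 1) l)) by (unfold opp, scal; simpl; unfold mult; simpl; ring).
  exact Hc.
Qed.

Lemma in_fbar_right f1 f2 a b c x : - b < x ->
  in_fbar f1 f2 a b c (Some x, Some (a * f1 (x + b) + c)).
Proof. intros Hx. left. exists x. split; [lra|]. rewrite fabc_right by exact Hx. reflexivity. Qed.

Lemma in_fbar_left f1 f2 a b c x : x < - b ->
  in_fbar f1 f2 a b c (Some x, Some (- a * f2 (- x - b) + c)).
Proof. intros Hx. left. exists x. split; [lra|]. rewrite fabc_left by exact Hx. reflexivity. Qed.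

Lemma in_fbar_real f1 f2 a b c x y :
  in_fbar f1 f2 a b c (Some x, Some y) -> x <> - b /\ y = fabc f1 f2 a b c x.
Proof. intros [[x' [Hx E]] | [E | E]]; inversion E; subst; auto. Qed.

Definition fbar_through (f1 f2 : R -> R) (s xp yp : R) (q : P) : Prop :=
  exists a b c, 0 < a /\ in_fbar f1 f2 a b c (Some xp, Some yp) /\
    in_fbar f1 f2 a b c q /\ is_derive (fabc f1 f2 a b c) xp s.

Definition lbar_through (s xp yp : R) (q : P) : Prop :=
  exists t, in_lbar s t (Some xp, Some yp) /\ in_lbar s t q.

Lemma lbar_through_iff s xp yp q : lbar_through s xp yp q <-> in_lbar s (yp - s * xp) q.
Proof.
  split.
  - intros [t [[[x E] | E] Hq]]; [|discriminate]. inversion E; subst.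
    replace (s * x + t - s * x) with t by ring. exact Hq.
  - intros Hq. exists (yp - s * xp). split; [|exact Hq].
    left. exists xp. do 2 f_equal. ring.
Qed.

Lemma fbar_through_reflect f1 f2 s xp yp q :
  fbar_through f2 f1 s (- xp) (- yp) (reflect q) -> fbar_through f1 f2 s xp yp q.
Proof.
  intros [a [b [c [Ha [Hp [Hq Hd]]]]]].
  exists a, (- b), (- c). split; [exact Ha|].
  apply in_fbar_reflect in Hp. apply in_fbar_reflect in Hq. apply is_derive_fabc_reflect in Hd.
  unfold reflect in Hp; simpl in Hp.
  rewrite (Ropp_involutive xp), (Ropp_involutive yp) in Hp. rewrite Ropp_involutive in Hd.
  rewrite reflect_involutive in Hq. auto.
Qed.

Lemma fbar_through_right_branch f1 f2 s xp yp q u : hyperbolic f1 -> s < 0 -> 0 < u ->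
  in_fbar f1 f2 (s / Derive f1 u) (u - xp) (yp - s / Derive f1 u * f1 u) q ->
  fbar_through f1 f2 s xp yp q.
Proof.
  intros hf1 Hs Hu Hq. pose proof (Derive_neg hf1 Hu) as HD.
  exists (s / Derive f1 u), (u - xp), (yp - s / Derive f1 u * f1 u).
  split; [apply Rdiv_neg_neg; assumption|]. split; [|split; [exact Hq|]].
  - replace yp with (s / Derive f1 u * f1 (xp + (u - xp)) + (yp - s / Derive f1 u * f1 u))
      at 2 by (replace (xp + (u - xp)) with u by ring; ring).
    apply in_fbar_right. lra.
  - pose proof (is_derive_fabc_right f2 (s / Derive f1 u) (yp - s / Derive f1 u * f1 u)
      (x := xp) (b := u - xp) ltac:(replace (xp + (u - xp)) with u by ring;
      exact (hyperbolic_derivable hf1 Hu)) ltac:(lra)) as Hd.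
    replace (s / Derive f1 u * Derive f1 (xp + (u - xp))) with s in Hd
      by (replace (xp + (u - xp)) with u by ring; field; lra).
    exact Hd.
Qed.

Section FbarThroughRight.

Variables f1 f2 : R -> R.
Hypothesis hf1 : hyperbolic f1.
Hypothesis hf2 : hyperbolic f2.
Variables s xp yp : R.
Hypothesis hs : s < 0.

Lemma fbar_through_same_branch xq yq u : 0 < u -> 0 < u + (xq - xp) ->
  f1 (u + (xq - xp)) - f1 u = (yq - yp) / s * Derive f1 u ->
  fbar_through f1 f2 s xp yp (Some xq, Some yq).
Proof.
  intros Hu Hq Hsec. pose proof (Derive_neg hf1 Hu).
  apply (fbar_through_right_branch hf1 hs Hu).
  replace yq with (s / Derive f1 u * f1 (xq + (u - xp)) + (yp - s / Derive f1 u * f1 u)).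
  - apply in_fbar_right. lra.
  - replace (xq + (u - xp)) with (u + (xq - xp)) by ring.
    replace (f1 (u + (xq - xp))) with (f1 u + (yq - yp) / s * Derive f1 u) by lra.
    field. lra.
Qed.

Lemma fbar_through_other_branch xq yq u : 0 < u -> u + (xq - xp) < 0 ->
  f1 u + f2 (- u - (xq - xp)) + (yq - yp) / s * Derive f1 u = 0 ->
  fbar_through f1 f2 s xp yp (Some xq, Some yq).
Proof.
  intros Hu Hq Hsum. pose proof (Derive_neg hf1 Hu).
  apply (fbar_through_right_branch hf1 hs Hu).
  replace yq with (- (s / Derive f1 u) * f2 (- xq - (u - xp)) + (yp - s / Derive f1 u * f1 u)).
  - apply in_fbar_left. lra.
  - replace (- xq - (u - xp)) with (- u - (xq - xp)) by ring.
    replace (f2 (- u - (xq - xp))) with (- f1 u - (yq - yp) / s * Derive f1 u) by lra.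
    field. lra.
Qed.

Lemma fbar_through_real_right xq yq :
  let d := xq - xp in let m := (yq - yp) / s in
  0 < m < d \/ m < d < 0 \/ d < 0 < m -> fbar_through f1 f2 s xp yp (Some xq, Some yq).
Proof.
  intros d m [Hdm | [Hdm | Hdm]].
  - destruct (exists_secant_tangent_pos hf1 Hdm) as [u [Hu Hsec]].
    apply (fbar_through_same_branch (u := u)); [lra | unfold d in *; lra | exact Hsec].
  - destruct (exists_secant_tangent_neg hf1 Hdm) as [u [Hu Hsec]].
    apply (fbar_through_same_branch (u := u)); [unfold d in *; lra | exact Hu | exact Hsec].
  - destruct (exists_tangent_two_branches hf1 hf2 Hdm) as [u [Hu [Hud Hsum]]].
    exact (fbar_through_other_branch Hu Hud Hsum).
Qed.

Lemma fbar_through_vertical_right xq : xq < xp -> fbar_through f1 f2 s xp yp (Some xq, None).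
Proof.
  intros Hx. apply (fbar_through_right_branch (u := xp - xq) hf1 hs); [lra|].
  right; left. do 2 f_equal. ring.
Qed.

Lemma fbar_through_horizontal_right yq : yq < yp -> fbar_through f1 f2 s xp yp (None, Some yq).
Proof.
  intros Hy.
  destruct (exists_tangent_root hf1 (m := (yq - yp) / s) ltac:(apply Rdiv_neg_neg; lra))
    as [u [Hu Hroot]].
  pose proof (Derive_neg hf1 Hu).
  apply (fbar_through_right_branch hf1 hs Hu). right; right. do 2 f_equal.
  replace (f1 u) with (- ((yq - yp) / s * Derive f1 u)) by lra. field. lra.
Qed.

End FbarThroughRight.

Lemma lbar_or_fbar_through f1 f2 s xp yp q : hyperbolic f1 -> hyperbolic f2 -> s < 0 ->
  ~ parallel (Some xp, Some yp) q -> lbar_through s xp yp q \/ fbar_through f1 f2 s xp yp q.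
Proof.
  intros hf1 hf2 Hs Hnp. rewrite lbar_through_iff. unfold parallel in Hnp; simpl in Hnp.
  destruct q as [[xq|] [yq|]].
  - assert (Hx : xq <> xp) by (intros ->; auto).
    assert (Hy : yq <> yp) by (intros ->; auto).
    destruct (Req_dec (yq - yp) (s * (xq - xp))) as [Hl|Hl].
    { left. left. exists xq. do 2 f_equal. lra. }
    right.
    set (d := xq - xp). set (m := (yq - yp) / s).
    assert (Hm : yq - yp = s * m) by (unfold m; field; lra).
    assert (Hd0 : d <> 0) by (unfold d; lra).
    assert (Hm0 : m <> 0) by (intros Hm0; rewrite Hm0 in Hm; lra).
    assert (Hmd : m <> d) by (intros Hmd; apply Hl; rewrite Hm, Hmd; reflexivity).
    assert (Hcases : (0 < m < d \/ m < d < 0 \/ d < 0 < m) \/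
                     (0 < - m < - d \/ - m < - d < 0 \/ - d < 0 < - m)).
    { destruct (Rlt_or_le 0 d), (Rlt_or_le 0 m), (Rlt_or_le m d); lra. }
    destruct Hcases as [Hcases | Hcases].
    + exact (fbar_through_real_right hf1 hf2 Hs Hcases).
    + apply fbar_through_reflect, (fbar_through_real_right hf2 hf1 (xp := - xp) (yp := - yp) Hs).
      replace (- xq - - xp) with (- d) by (unfold d; ring).
      replace ((- yq - - yp) / s) with (- m) by (unfold m; field; lra).
      exact Hcases.
  - right. assert (Hx : xq <> xp) by (intros ->; auto).
    destruct (Rlt_or_le xq xp).
    + apply fbar_through_vertical_right; assumption.
    + apply fbar_through_reflect, (fbar_through_vertical_right _ hf2); [assumption | simpl; lra].
  - right. assert (Hy : yq <> yp) by (intros ->; auto).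
    destruct (Rlt_or_le yq yp).
    + apply fbar_through_horizontal_right; assumption.
    + apply fbar_through_reflect, (fbar_through_horizontal_right _ hf2); [assumption | simpl; lra].
  - left. right. reflexivity.
Qed.

Lemma tangent_misses_fbar_right f1 f2 a b c s xp yp xq yq :
  hyperbolic f1 -> hyperbolic f2 -> s < 0 -> 0 < a -> - b < xp -> xq <> xp ->
  in_fbar f1 f2 a b c (Some xp, Some yp) -> in_fbar f1 f2 a b c (Some xq, Some yq) ->
  is_derive (fabc f1 f2 a b c) xp s -> yq - yp <> s * (xq - xp).
Proof.
  intros hf1 hf2 Hs Ha Hp Hx [_ Hyp]%in_fbar_real [Hq Hyq]%in_fbar_real Hd.
  rewrite fabc_right in Hyp by exact Hp.
  apply is_derive_unique in Hd.
  rewrite (is_derive_unique _ _ _ (is_derive_fabc_right f2 a c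
    (hyperbolic_derivable hf1 (x := xp + b) ltac:(lra)) Hp)) in Hd.
  destruct (Rlt_dec (- b) xq) as [Hqr | Hql].
  - rewrite fabc_right in Hyq by exact Hqr.
    pose proof (tangent_lt (hyperbolic_convex hf1) (hyperbolic_derivable hf1)
      (x := xp + b) (y := xq + b) ltac:(lra) ltac:(lra) ltac:(lra)) as Ht.
    replace (xq + b - (xp + b)) with (xq - xp) in Ht by ring.
    apply (Rmult_lt_compat_l a) in Ht; [|exact Ha]. nra.
  - rewrite fabc_left in Hyq by lra.
    pose proof (hyperbolic_pos hf1 (x := xp + b) ltac:(lra)).
    pose proof (hyperbolic_pos hf2 (x := - xq - b) ltac:(lra)).
    assert (0 < s * (xq - xp)) by nra. nra.
Qed.

Lemma not_lbar_and_fbar_through f1 f2 s xp yp q : hyperbolic f1 -> hyperbolic f2 -> s < 0 ->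
  ~ parallel (Some xp, Some yp) q -> ~ (lbar_through s xp yp q /\ fbar_through f1 f2 s xp yp q).
Proof.
  intros hf1 hf2 Hs Hnp [Hl [a [b [c [Ha [Hp [Hq Hd]]]]]]].
  rewrite lbar_through_iff in Hl.
  destruct Hl as [[xq ->] | ->].
  - assert (Hx : xq <> xp) by (intros ->; apply Hnp; left; reflexivity).
    assert (Hline : s * xq + (yp - s * xp) - yp = s * (xq - xp)) by ring.
    destruct (Rlt_dec (- b) xp) as [Hpr | Hpl].
    + exact (tangent_misses_fbar_right hf1 hf2 Hs Ha Hpr Hx Hp Hq Hd Hline).
    + apply in_fbar_real in Hp as Hp'.
      refine (tangent_misses_fbar_right hf2 hf1 Hs Ha _ _ (in_fbar_reflect Hp)
        (in_fbar_reflect Hq) (is_derive_fabc_reflect Hd) _); simpl; lra.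
  - destruct Hq as [[x [_ E]] | [E | E]]; discriminate.
Qed.

Theorem lemma4p12 (f1 f2 : R -> R) (xp yp s : R) (q : P) :
  strongly_hyperbolic f1 -> strongly_hyperbolic f2 ->
  s < 0 ->
  ~ parallel (Some xp, Some yp) q ->
  let A := exists t : R, in_lbar s t (Some xp, Some yp) /\ in_lbar s t q in
  let B := exists a1 b1 c1 : R, 0 < a1 /\
             in_fbar f1 f2 a1 b1 c1 (Some xp, Some yp) /\
             in_fbar f1 f2 a1 b1 c1 q /\
             is_derive (fabc f1 f2 a1 b1 c1) xp s in
  (A \/ B) /\ ~ (A /\ B).
Proof.
  intros H1 H2 Hs Hnp A B.
  pose proof (strongly_hyperbolic_hyperbolic H1) as hf1.
  pose proof (strongly_hyperbolic_hyperbolic H2) as hf2.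
  split.
  - exact (lbar_or_fbar_through hf1 hf2 Hs Hnp).
  - exact (not_lbar_and_fbar_through hf1 hf2 Hs Hnp).
Qed.
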